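(* Let $S=(G,P,\Lambda,I)$ be a completely simple semigroup in Rees form. (a) Suppose the columns of $P$ with indices $\lambda,\mu\in\Lambda$ are equal, i.e. $p_{k\lambda}=p_{k\mu}$ for all $k\in I$. Put $s_1=(\lambda,1,1)$, $s_2=(\mu,1,1)$. Then for every $\mathcal{L}_S$-term $t(x)$ in one variable $x$: if the word $[t](x)$ does not begin with the variable $x$, then $t(s_1)=t(s_2)$; if $[t](x)$ begins with $x$, then there are $g\in G$, $k\in I$ with $t(s_1)=(\lambda,g,k)$ and $t(s_2)=(\mu,g,k)$ (so the two values differ at most in the first index). (b) Symmetrically, suppose the rows of $P$ with indices $i,j\in I$ are equal, i.e. $p_{i\nu}=p_{j\nu}$ for all $\nu\in\Lambda$. Put $s_1=(1,1,i)$, $s_2=(1,1,j)$. Then for every $\mathcal{L}_S$-term $t(x)$: if $[t](x)$ does not end with $x$, then $t(s_1)=t(s_2)$; if $[t](x)$ ends with $x$, then there are $g\in G$, $\nu\in\Lambda$ with $t(s_1)=(\nu,g,i)$ and $t(s_2)=(\nu,g,j)$.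
   Context: Rees representation: a completely simple (c.s.) semigroup $S=(G,P,\Lambda,I)$ is given by a group $G$, index sets $\Lambda$ and $I$ (each containing a distinguished element $1$), and a matrix $P=(p_{i\lambda})_{i\in I,\lambda\in\Lambda}$ with entries in $G$ (rows indexed by $I$, columns by $\Lambda$), normalised so that $p_{1\lambda}=p_{i1}=1_G$ for all $i\in I,\lambda\in\Lambda$. Its elements are triples $(\lambda,g,i)$ with $\lambda\in\Lambda$, $g\in G$, $i\in I$ ($\lambda$ is the first index, $i$ the second index), with multiplication $(\lambda,g,i)(\mu,h,j)=(\lambda,g p_{i\mu} h,j)$ and inversion $(\lambda,g,i)^{-1}=(\lambda,p_{i\lambda}^{-1}g^{-1}p_{i\lambda}^{-1},i)$. The language $\mathcal{L}_S$ consists of $\cdot$, ${}^{-1}$ and a constant for every element of $S$. An $\mathcal{L}_S$-term in variables $X$ is built from variables and constants by products and by applying ${}^{-1}$. For a term $t$, $[t]$ denotes the word (sequence of variables and constants) obtained from $t$ by deleting all occurrences of the inversion (e.g. if $t=((xsy^{-1})^{-1}zx^{-1})^{-1}$ then $[t]=xsyzx$); ''begins/ends with $x$'' refers to the first/last symbol of this word. *)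

From Stdlib Require Import List.
Import ListNotations.
Set Implicit Arguments.

Record Group := {
  gcarrier :> Type;
  gmul : gcarrier -> gcarrier -> gcarrier;
  ginv : gcarrier -> gcarrier;
  gone : gcarrier;
  gmulA : forall a b c, gmul a (gmul b c) = gmul (gmul a b) c;
  gmul1l : forall a, gmul gone a = a;
  gmul1r : forall a, gmul a gone = a;
  gmulVl : forall a, gmul (ginv a) a = gone;
  gmulVr : forall a, gmul a (ginv a) = gone
}.

Section Rees.
Variables (G : Group) (Lam Ii : Type) (P : Ii -> Lam -> G).

Definition RS : Type := (Lam * G * Ii)%type.

Definition rs_mul (a b : RS) : RS :=
  match a, b with
  | (lam, g, i), (mu, h, j) => (lam, gmul G (gmul G g (P i mu)) h, j)
  end.

Definition rs_inv (a : RS) : RS :=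
  match a with
  | (lam, g, i) =>
      (lam, gmul G (gmul G (ginv G (P i lam)) (ginv G g)) (ginv G (P i lam)), i)
  end.

Inductive term : Type :=
| tvar : term
| tconst : RS -> term
| tmul : term -> term -> term
| tinv : term -> term.

Fixpoint eval (s : RS) (t : term) : RS :=
  match t with
  | tvar => s
  | tconst c => c
  | tmul t1 t2 => rs_mul (eval s t1) (eval s t2)
  | tinv t1 => rs_inv (eval s t1)
  end.

Inductive symbol : Type :=
| sym_var : symbol
| sym_const : RS -> symbol.

Fixpoint word (t : term) : list symbol :=
  match t with
  | tvar => [sym_var]
  | tconst c => [sym_const c]
  | tmul t1 t2 => word t1 ++ word t2
  | tinv t1 => word t1
  end.

Definition is_var (a : symbol) : Prop :=
  match a with sym_var => True | sym_const _ => False end.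

Definition begins_with_x (t : term) : Prop :=
  match word t with a :: _ => is_var a | [] => False end.

Definition ends_with_x (t : term) : Prop :=
  match rev (word t) with a :: _ => is_var a | [] => False end.

End Rees.

(* Right multiplication by (mu, h, j) reads only the column mu of P, and inversion of
   (lam, g, k) reads only the entry P k lam; hence if two columns of P coincide, the
   first index of an element is only ever carried along to the left end of a product,
   and the first index of a term's value is that of its leftmost symbol.  The
   statement about rows is the mirror image. *)
From Stdlib Require Import List.
Import ListNotations.
Set Implicit Arguments.

Lemma word_nonempty (G : Group) (Lam Ii : Type) (t : term G Lam Ii) : word t <> [].
Proof.
  induction t as [| c | t1 IH1 t2 _ | t1 IH1]; simpl; try discriminate; auto.
  destruct (word t1); [congruence | discriminate].
Qed.

Lemma begins_with_x_mul (G : Group) (Lam Ii : Type) (t1 t2 : term G Lam Ii) :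
  begins_with_x (tmul t1 t2) = begins_with_x t1.
Proof.
  unfold begins_with_x; simpl.
  pose proof (word_nonempty t1); destruct (word t1); [congruence | reflexivity].
Qed.

Lemma ends_with_x_mul (G : Group) (Lam Ii : Type) (t1 t2 : term G Lam Ii) :
  ends_with_x (tmul t1 t2) = ends_with_x t2.
Proof.
  unfold ends_with_x; simpl; rewrite rev_app_distr.
  destruct (rev (word t2)) eqn:E; [| reflexivity].
  exfalso; apply (word_nonempty t2).
  now rewrite <- (rev_involutive (word t2)), E.
Qed.

Lemma is_var_dec (G : Group) (Lam Ii : Type) (a : symbol G Lam Ii) :
  {is_var a} + {~ is_var a}.
Proof. destruct a; simpl; tauto. Qed.

Lemma begins_with_x_dec (G : Group) (Lam Ii : Type) (t : term G Lam Ii) :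
  {begins_with_x t} + {~ begins_with_x t}.
Proof. unfold begins_with_x; destruct (word t); [tauto | apply is_var_dec]. Qed.

Lemma ends_with_x_dec (G : Group) (Lam Ii : Type) (t : term G Lam Ii) :
  {ends_with_x t} + {~ ends_with_x t}.
Proof. unfold ends_with_x; destruct (rev (word t)); [tauto | apply is_var_dec]. Qed.

Section EqualColumns.
Variables (G : Group) (Lam Ii : Type) (P : Ii -> Lam -> G) (lam mu : Lam).
Hypothesis col_eq : forall k, P k lam = P k mu.

Definition same_but_first (a b : RS G Lam Ii) : Prop :=
  exists g k, a = (lam, g, k) /\ b = (mu, g, k).

Lemma rs_mul_same_but_first c a b :
  same_but_first a b -> rs_mul P c a = rs_mul P c b.
Proof.
  intros (g & k & -> & ->); destruct c as [[nu h] i]; simpl.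
  now rewrite col_eq.
Qed.

Lemma same_but_first_mul a b c :
  same_but_first a b -> same_but_first (rs_mul P a c) (rs_mul P b c).
Proof.
  intros (g & k & -> & ->); destruct c as [[nu h] i].
  now do 2 eexists.
Qed.

Lemma same_but_first_inv a b :
  same_but_first a b -> same_but_first (rs_inv P a) (rs_inv P b).
Proof.
  intros (g & k & -> & ->); simpl; rewrite col_eq.
  now do 2 eexists.
Qed.

Lemma eval_same_but_first s1 s2 (t : term G Lam Ii) :
  same_but_first s1 s2 ->
  (~ begins_with_x t -> eval P s1 t = eval P s2 t) /\
  (begins_with_x t -> same_but_first (eval P s1 t) (eval P s2 t)).
Proof.
  intros Hs.
  induction t as [| c | t1 [N1 B1] t2 [N2 B2] | t1 [N1 B1]]; simpl.
  - split; [now intros [] | easy].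
  - split; [easy | now intros []].
  - rewrite begins_with_x_mul.
    assert (Hright : forall a, rs_mul P a (eval P s1 t2) = rs_mul P a (eval P s2 t2)).
    { intros a; destruct (begins_with_x_dec t2) as [H2 | H2].
      - now apply rs_mul_same_but_first, B2.
      - now rewrite (N2 H2). }
    split; intros H1; rewrite Hright.
    + now rewrite (N1 H1).
    + now apply same_but_first_mul, B1.
  - split; intros H1.
    + now rewrite (N1 H1).
    + now apply same_but_first_inv, B1.
Qed.

End EqualColumns.

Section EqualRows.
Variables (G : Group) (Lam Ii : Type) (P : Ii -> Lam -> G) (i j : Ii).
Hypothesis row_eq : forall nu, P i nu = P j nu.

Definition same_but_last (a b : RS G Lam Ii) : Prop :=
  exists nu g, a = (nu, g, i) /\ b = (nu, g, j).

Lemma same_but_last_rs_mul a b c :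
  same_but_last a b -> rs_mul P a c = rs_mul P b c.
Proof.
  intros (nu & g & -> & ->); destruct c as [[mu h] k]; simpl.
  now rewrite row_eq.
Qed.

Lemma rs_mul_same_but_last c a b :
  same_but_last a b -> same_but_last (rs_mul P c a) (rs_mul P c b).
Proof.
  intros (nu & g & -> & ->); destruct c as [[mu h] k].
  now do 2 eexists.
Qed.

Lemma same_but_last_inv a b :
  same_but_last a b -> same_but_last (rs_inv P a) (rs_inv P b).
Proof.
  intros (nu & g & -> & ->); simpl; rewrite row_eq.
  now do 2 eexists.
Qed.

Lemma eval_same_but_last s1 s2 (t : term G Lam Ii) :
  same_but_last s1 s2 ->
  (~ ends_with_x t -> eval P s1 t = eval P s2 t) /\
  (ends_with_x t -> same_but_last (eval P s1 t) (eval P s2 t)).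
Proof.
  intros Hs.
  induction t as [| c | t1 [N1 B1] t2 [N2 B2] | t1 [N1 B1]]; simpl.
  - split; [now intros [] | easy].
  - split; [easy | now intros []].
  - rewrite ends_with_x_mul.
    assert (Hleft : forall a, rs_mul P (eval P s1 t1) a = rs_mul P (eval P s2 t1) a).
    { intros a; destruct (ends_with_x_dec t1) as [H1 | H1].
      - now apply same_but_last_rs_mul, B1.
      - now rewrite (N1 H1). }
    split; intros H2; rewrite Hleft.
    + now rewrite (N2 H2).
    + now apply rs_mul_same_but_last, B2.
  - split; intros H1.
    + now rewrite (N1 H1).
    + now apply same_but_last_inv, B1.
Qed.

End EqualRows.

Theorem mainTheorem1
  (G : Group) (Lam Ii : Type) (l1 : Lam) (i1 : Ii) (P : Ii -> Lam -> G)
  (Pnorm_row : forall lam : Lam, P i1 lam = gone G)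
  (Pnorm_col : forall i : Ii, P i l1 = gone G) :
  (forall lam mu : Lam,
     (forall k : Ii, P k lam = P k mu) ->
     forall t : term G Lam Ii,
       (~ begins_with_x t ->
          eval P (lam, gone G, i1) t = eval P (mu, gone G, i1) t) /\
       (begins_with_x t ->
          exists (g : G) (k : Ii),
            eval P (lam, gone G, i1) t = (lam, g, k) /\
            eval P (mu, gone G, i1) t = (mu, g, k)))
  /\
  (forall i j : Ii,
     (forall nu : Lam, P i nu = P j nu) ->
     forall t : term G Lam Ii,
       (~ ends_with_x t ->
          eval P (l1, gone G, i) t = eval P (l1, gone G, j) t) /\
       (ends_with_x t ->
          exists (g : G) (nu : Lam),
            eval P (l1, gone G, i) t = (nu, g, i) /\
            eval P (l1, gone G, j) t = (nu, g, j))).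
Proof.
  split.
  - intros lam mu col_eq t.
    apply (eval_same_but_first P col_eq).
    now do 2 eexists.
  - intros i j row_eq t.
    destruct (eval_same_but_last P row_eq (s1 := (l1, gone G, i)) (s2 := (l1, gone G, j)) t)
      as [N B]; [now do 2 eexists |].
    split; [exact N |].
    intros H; destruct (B H) as (nu & g & E1 & E2).
    now exists g, nu.
Qed.
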